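(* In the standing setting below, let $2\leq\ell\leq k-2$ and let $M_k$ be the set of $k$-cycles $(x_1,\dots,x_k)\in X_1\times\dots\times X_k$ such that $(x_1,\dots,x_\ell)$ is a bad $[\ell]$-tuple, $(x_1,\dots,x_{\ell-1})$ is not a bad $[\ell-1]$-tuple, and $(x_1,\dots,x_{\ell-1},x_k)$ is not a bad $([\ell-1]\cup\{k\})$-tuple. Then for every $(x_\ell,\dots,x_{k-1})\in X_\ell\times\dots\times X_{k-1}$ there are at most $\frac12\alpha^{\ell-1}N^{\ell-1}$ $k$-cycles in $M_k$ whose coordinates $\ell,\dots,k-1$ are $x_\ell,\dots,x_{k-1}$.
   Context: Let $p$ be a fixed prime, $n\geq1$, $N=p^n$, $[m]=\{1,\dots,m\}$. For sets $X_1,\dots,X_k\subseteq\mathbb{F}_p^n$, a $k$-cycle is a tuple $(x_1,\dots,x_k)\in X_1\times\dots\times X_k$ with $x_1+\dots+x_k=0$. Standing setting: $k\geq4$, $X_1,\dots,X_k\subseteq\mathbb{F}_p^n$, the number of $k$-cycles in $X_1\times\dots\times X_k$ equals $\delta'N^{k-1}$ with $\delta'>0$, and $\theta\geq 1$ is such that for each $i\in[k]$ every point of $X_i$ occurs as $x_i$ in at most $\theta\delta'N^{k-2}$ $k$-cycles. Put $\alpha=(\theta\delta')^{1/(k-2)}$. For $I\subseteq[k]$ with $1\leq|I|\leq k-2$, an $I$-tuple is an element $(x_i)_{i\in I}\in\prod_{i\in I}X_i$; it is called bad if there are at least $2\alpha^{k-|I|-1}N^{k-|I|-1}$ $k$-cycles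 $(x_1,\dots,x_k)\in X_1\times\dots\times X_k$ whose coordinates indexed by $I$ coincide with the given tuple. *)

From HB Require Import structures.
From mathcomp Require Import all_boot all_order all_algebra.
Set Implicit Arguments. Unset Strict Implicit. Unset Printing Implicit Defensive.
Import Order.TTheory GRing.Theory Num.Theory.
Local Open Scope ring_scope.

(* Indices 1..k of the paper are represented by 'I_k (0-based: index i of the
   paper is the ordinal i-1).  F_p^n is 'rV['F_p]_n. *)

Definition kcycles (p n k : nat) (X : 'I_k -> {set 'rV['F_p]_n}) :
  {set {ffun 'I_k -> 'rV['F_p]_n}} :=
  [set c : {ffun 'I_k -> 'rV['F_p]_n} |
     [forall i, c i \in X i] && (\sum_(i < k) c i == 0)].

Definition ext_count (p n k : nat) (X : 'I_k -> {set 'rV['F_p]_n})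
  (I : {set 'I_k}) (y : 'I_k -> 'rV['F_p]_n) : nat :=
  #|[set c in kcycles X | [forall i in I, c i == y i]]|.

(* (y_i)_{i in I} is a bad I-tuple (only the values of y on I matter). *)
Definition is_bad (R : realFieldType) (p n k : nat)
  (X : 'I_k -> {set 'rV['F_p]_n}) (alpha : R)
  (I : {set 'I_k}) (y : 'I_k -> 'rV['F_p]_n) : bool :=
  [&& (1 <= #|I|)%N, (#|I| <= k - 2)%N,
      [forall i in I, y i \in X i] &
      2 * alpha ^+ (k - #|I| - 1) * ((p ^ n)%N)%:R ^+ (k - #|I| - 1)
        <= (ext_count X I y)%:R].

(* [m] = {1..m} as a subset of 'I_k. *)
Definition first_idx (k m : nat) : {set 'I_k} := [set i : 'I_k | (i < m)%N].

Definition first_idx_last (k m : nat) : {set 'I_k} :=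
  [set i : 'I_k | (i < m)%N || (val i == k.-1)].

Definition Mk (R : realFieldType) (p n k : nat)
  (X : 'I_k -> {set 'rV['F_p]_n}) (alpha : R) (l : nat) :
  {set {ffun 'I_k -> 'rV['F_p]_n}} :=
  [set c in kcycles X |
     [&& is_bad X alpha (first_idx k l) c,
         ~~ is_bad X alpha (first_idx k l.-1) c &
         ~~ is_bad X alpha (first_idx_last k l.-1) c]].

From HB Require Import structures.
From mathcomp Require Import all_boot all_order all_algebra.
From mathcomp Require Import zify.
Import Order.TTheory GRing.Theory Num.Theory.
Local Open Scope ring_scope.

(* Let T be the set of cycles of M_k with prescribed coordinates
   y_l, ..., y_(k-1).  Every c in T is bad on [l], hence has at least
   2 (alpha N)^(k-l-1) extensions agreeing with it on [l].  A common extension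
   of c, c' in T makes them agree on every coordinate but the last one, hence
   c = c' since the coordinates of a k-cycle sum to 0: the extension sets are
   pairwise disjoint.  They all lie among the k-cycles with x_l = y_l, of which
   there are at most theta delta' N^(k-2) = (alpha N)^(k-2).  Dividing gives
   |T| <= (alpha N)^(l-1) / 2. *)

Lemma gt0_of_expf_neq0 (R : numDomainType) (x : R) (m : nat) :
  (0 < m)%N -> 0 <= x -> x ^+ m != 0 -> 0 < x.
Proof. by move=> m_gt0 x_ge0; rewrite lt0r x_ge0 andbT expf_eq0 m_gt0. Qed.

Lemma leq_sum_card_disjoint (I T : finType) (A : {set I}) (U : {set T})
    (E : I -> {set T}) :
  {in A, forall i, E i \subset U} ->
  {in A &, forall i j, i != j -> [disjoint E i & E j]} ->
  (\sum_(i in A) #|E i| <= #|U|)%N.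
Proof.
move=> EsubU disjE.
pose S := [set u : I * T | (u.1 \in A) && (u.2 \in E u.1)].
have -> : (\sum_(i in A) #|E i| = #|S|)%N.
  rewrite -sum1dep_card
    -(pair_big_dep (mem A) (fun i => mem (E i)) (fun _ _ => 1%N)) /=.
  by apply: eq_bigr => i _; rewrite sum1_card.
have snd_inj : {in S &, injective snd}.
  move=> [i x] [j y]; rewrite !inE /= => /andP[iA xi] /andP[jA yj] yx.
  rewrite -{}yx in yj *; congr (_, _); apply/eqP; apply: contraTT yj => ij.
  by rewrite (disjointFr (disjE i j iA jA ij) xi).
rewrite -(card_in_imset snd_inj); apply: subset_leq_card; apply/subsetP.
by move=> _ /imsetP[[i x] /[!inE] /andP[iA xi] ->]; exact: subsetP (EsubU i iA) x xi.
Qed.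

Section KCycles.

Set Implicit Arguments.
Unset Strict Implicit.

Variables (p n k : nat) (X : 'I_k -> {set 'rV['F_p]_n}).

Local Notation ktuple := {ffun 'I_k -> 'rV['F_p]_n}.

Definition extensions (I : {set 'I_k}) (y : 'I_k -> 'rV['F_p]_n) :=
  [set c in kcycles X | [forall i in I, c i == y i]].

Lemma kcycle_eq_off (j : 'I_k) (c c' : ktuple) :
  c \in kcycles X -> c' \in kcycles X -> (forall i, i != j -> c i = c' i) ->
  c = c'.
Proof.
rewrite !inE => /andP[_ /eqP sum_c] /andP[_ /eqP sum_c'] eq_off.
have sum_off : \sum_(i < k | i != j) c i = \sum_(i < k | i != j) c' i.
  exact: eq_bigr.
apply/ffunP => i; have [->|/eq_off //] := eqVneq i j.
rewrite (bigD1 j) //= sum_off in sum_c; rewrite (bigD1 j) //= in sum_c'.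
by apply: (@addIr _ (\sum_(i < k | i != j) c' i)); rewrite sum_c sum_c'.
Qed.

Lemma card_first_idx l : (l <= k)%N -> #|first_idx k l| = l.
Proof.
move=> lk; have -> : first_idx k l = [set widen_ord lk j | j in 'I_l].
  apply/setP => i; rewrite inE; apply/idP/imsetP => [il|[[j jl] _ ->] //].
  by exists (Ordinal il); last exact: val_inj.
by rewrite card_imset ?card_ord // => i j [/val_inj].
Qed.

Lemma kcycle_eq_but_last (l : nat) (c c' : ktuple) :
  (0 < k)%N -> c \in kcycles X -> c' \in kcycles X ->
  {in first_idx k l, c =1 c'} ->
  (forall i : 'I_k, (l <= i <= k - 2)%N -> c i = c' i) -> c = c'.
Proof.
move=> k_gt0 cK c'K eq_first eq_mid; have klast : (k.-1 < k)%N by lia.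
apply: (kcycle_eq_off (j := Ordinal klast)) => // i.
rewrite -(inj_eq val_inj) /= => i_nlast.
have [il|li] := ltnP i l; first by apply: eq_first; rewrite inE.
by apply: eq_mid; rewrite li /=; have := ltn_ord i; lia.
Qed.

Lemma sum_ext_count_le (I : {set 'I_k}) (i0 : 'I_k) (v : 'rV['F_p]_n)
    (T : {set ktuple}) :
  i0 \in I -> {in T, forall c : ktuple, c i0 = v} ->
  {in T &, forall c c' : ktuple, {in I, c =1 c'} -> c = c'} ->
  (\sum_(c in T) ext_count X I c <= #|[set c in kcycles X | c i0 == v]|)%N.
Proof.
move=> Ii0 Tv Tinj.
apply: (@leq_sum_card_disjoint _ _ T _ (extensions I)) => [c cT|c c' cT c'T].
  apply/subsetP => d; rewrite !inE => /andP[-> /forallP/(_ i0)].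
  by rewrite Ii0 (Tv c cT).
apply: contraNT => /pred0Pn[d /andP[]]; rewrite !inE.
move=> /andP[_ /forall_inP dc] /andP[_ /forall_inP dc'].
by apply/eqP/Tinj => // i Ii; rewrite -(eqP (dc i Ii)) (eqP (dc' i Ii)).
Qed.

Lemma card_mul_le_of_ext_count_ge (R : numDomainType) (I : {set 'I_k})
    (i0 : 'I_k) (v : 'rV['F_p]_n) (T : {set ktuple}) (b : R) :
  i0 \in I -> {in T, forall c : ktuple, c i0 = v} ->
  {in T &, forall c c' : ktuple, {in I, c =1 c'} -> c = c'} ->
  {in T, forall c : ktuple, b <= (ext_count X I c)%:R} ->
  #|T|%:R * b <= #|[set c in kcycles X | c i0 == v]|%:R.
Proof.
move=> Ii0 Tv Tinj ext_ge; rewrite mulr_natl -sumr_const.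
apply: le_trans (_ : (\sum_(c in T) ext_count X I c)%:R <= _).
  by rewrite natr_sum; exact: ler_sum.
by rewrite ler_nat; exact: sum_ext_count_le.
Qed.

End KCycles.

Theorem lemma8 (R : realFieldType) (p n k l : nat)
  (X : 'I_k -> {set 'rV['F_p]_n}) (delta' theta alpha : R) :
  prime p -> (1 <= n)%N -> (4 <= k)%N ->
  #|kcycles X|%:R = delta' * ((p ^ n)%N)%:R ^+ (k - 1) ->
  0 < delta' ->
  1 <= theta ->
  (forall (i : 'I_k) (v : 'rV['F_p]_n), v \in X i ->
     #|[set c in kcycles X | c i == v]|%:R
       <= theta * delta' * ((p ^ n)%N)%:R ^+ (k - 2)) ->
  0 <= alpha -> alpha ^+ (k - 2) = theta * delta' ->
  (2 <= l)%N -> (l <= k - 2)%N ->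
  forall y : 'I_k -> 'rV['F_p]_n,
    (forall i : 'I_k, (l.-1 <= i)%N -> (i <= k - 2)%N -> y i \in X i) ->
    #|[set c in Mk X alpha l |
        [forall i : 'I_k, ((l.-1 <= i)%N && (i <= k - 2)%N) ==> (c i == y i)]]|%:R
      <= 2^-1 * alpha ^+ (l - 1) * ((p ^ n)%N)%:R ^+ (l - 1).
Proof.
move=> p_pr _ k_ge4 _ delta'_gt0 theta_ge1 deg_le alpha_ge0 alphaE l_ge2 l_le y yX.
set N : R := ((p ^ n)%N)%:R; set T := [set c in Mk X alpha l | _].
have T_mem c : c \in T -> [/\ c \in kcycles X, is_bad X alpha (first_idx k l) c
    & forall i : 'I_k, (l.-1 <= i <= k - 2)%N -> c i = y i].
  rewrite !inE => /andP[/andP[cK /and3P[bad _ _]] /forallP agree].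
  by split=> // i /andP[li ik]; apply/eqP; move: (agree i); rewrite li ik.
have lk : (l.-1 < k)%N by lia.
pose i0 : 'I_k := Ordinal lk.
have i0_first : i0 \in first_idx k l by rewrite inE /= ltn_predL; lia.
have T_y : {in T, forall c : {ffun _ -> _}, c i0 = y i0}.
  by move=> c /T_mem[_ _ ->] //=; rewrite leqnn; lia.
have T_inj : {in T &, forall c c' : {ffun _ -> _},
    {in first_idx k l, c =1 c'} -> c = c'}.
  move=> c c' /T_mem[cK _ cy] /T_mem[c'K _ c'y] eq_first.
  apply: (kcycle_eq_but_last _ cK c'K eq_first) => [|i /andP[li ik]]; first lia.
  by rewrite cy ?c'y // ik (leq_trans (leq_pred l)).
have alpha_gt0 : 0 < alpha.
  apply: (@gt0_of_expf_neq0 _ _ (k - 2) _ alpha_ge0); first lia.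
  by rewrite alphaE mulf_neq0 // gt_eqF // (lt_le_trans ltr01).
pose a := (alpha * N) ^+ (k - l - 1).
have a_gt0 : 0 < a by rewrite exprn_gt0 // mulr_gt0 // ltr0n expn_gt0 prime_gt0.
have count_le : #|T|%:R * (2 * a) <= a * (alpha * N) ^+ (l - 1).
  apply: le_trans (card_mul_le_of_ext_count_ge (X := X) i0_first T_y T_inj _) _.
    move=> c /T_mem[_ /and4P[_ _ _ bad] _]; move: bad.
    by rewrite card_first_idx /a ?exprMn ?mulrA //; lia.
  rewrite /a -exprD (_ : (k - l - 1 + (l - 1) = k - 2)%N); last by lia.
  by rewrite exprMn alphaE; apply/deg_le/yX => /=; lia.
rewrite -mulrA -exprMn -(ler_pM2r (_ : 0 < 2 * a)) ?mulr_gt0 //.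
by rewrite mulrAC mulKf ?pnatr_eq0.
Qed.
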